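(* With notation as in the context (type $E_7$), let $x_1,x_2\in\Gamma_7^+$ with $x_1\neq x_2$. If $(x_1|x_2)=0$, then there exists a unique $x_3\in\Gamma_7^+\setminus\{x_1,x_2\}$ such that $(x_1|x_3)=(x_2|x_3)=0$; moreover this $x_3$ satisfies $x_1\oplus x_2\oplus x_3=000$. Conversely, if $x_1\oplus x_2\in\Gamma_7^+$, then $(x_1|x_2)=0$.
   Context: Let $F=\{0,1,2,3\}$ be the group $\mathbb{Z}/2\times\mathbb{Z}/2$ with operation $\oplus$ (binary addition without carry) and symplectic form $(a|a')=0$ if $a=0$, $a'=0$ or $a=a'$, and $1$ otherwise. Let $V=F^3$ (elements written $abc$), with coordinatewise $\oplus$ and form $(abc|a'b'c')=(a|a')+(b|b')+(c|c')\in\mathbb{Z}/2$. Let $\Delta$ be the $E_7$ root system with simple roots $\alpha_1,\dots,\alpha_7$, $\langle\alpha_i,\alpha_i\rangle=2$, $\langle\alpha_i,\alpha_j\rangle=-1$ for $\{i,j\}\in\{\{1,3\},\{3,4\},\{4,5\},\{5,6\},\{6,7\},\{2,4\}\}$, $0$ otherwise; $\Lambda=\bigoplus\mathbb{Z}\alpha_i$, $\Delta^+$ the positive roots. Let $f:\Lambda\to V$ be the homomorphism with $f(\alpha_1)=100$, $f(\alpha_2)=030$, $f(\alpha_3)=300$, $f(\alpha_4)=111$, $f(\alpha_5)=003$, $f(\alpha_6)=001$, $f(\alpha_7)=033$. Let $\Delta_7^+$ be the positive roots with nonzero $\alpha_7$-coefficient and $\Gamma_7^+=f(\Delta_7^+)$.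 *)

From mathcomp Require Import all_boot all_order all_algebra.
Set Implicit Arguments. Unset Strict Implicit. Unset Printing Implicit Defensive.
Import GRing.Theory Num.Theory.
Local Open Scope ring_scope.

(* F = Z/2 x Z/2, element k in {0,1,2,3} encoded by its two binary digits:
   0 = (false,false), 1 = (false,true), 2 = (true,false), 3 = (true,true).
   The operation (+) (binary addition without carry) is bitwise xor. *)
Definition F : finType := (bool * bool)%type.
Definition F0 : F := (false, false).
Definition F1 : F := (false, true).
Definition F2 : F := (true, false).
Definition F3 : F := (true, true).
Definition Fadd (a b : F) : F := (addb a.1 b.1, addb a.2 b.2).

(* symplectic form with values in Z/2 = bool (false = 0, true = 1) *)
Definition Fform (a a' : F) : bool := ~~ [|| a == F0, a' == F0 | a == a'].

(* V = F^3, element abc = (a, b, c) *)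
Definition V : finType := (F * F * F)%type.
Definition mkV (a b c : F) : V := (a, b, c).
Definition V0 : V := mkV F0 F0 F0.
Definition Vadd (x y : V) : V :=
  mkV (Fadd x.1.1 y.1.1) (Fadd x.1.2 y.1.2) (Fadd x.2 y.2).
Definition Vform (x y : V) : bool :=
  addb (addb (Fform x.1.1 y.1.1) (Fform x.1.2 y.1.2)) (Fform x.2 y.2).

(* E7 root lattice: Lambda = Z^7 (coefficients on alpha_1..alpha_7,
   index i : 'I_7 stands for alpha_(i+1)) *)
Definition Lambda := 'I_7 -> int.

Definition adjE7 (i j : nat) : bool :=
  [|| (i, j) == (1, 3)%N, (i, j) == (3, 4)%N, (i, j) == (4, 5)%N,
      (i, j) == (5, 6)%N, (i, j) == (6, 7)%N | (i, j) == (2, 4)%N].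

(* Cartan matrix <alpha_i, alpha_j> (indices 1-based inside) *)
Definition cartanE7 (i j : 'I_7) : int :=
  if i == j then 2
  else if adjE7 i.+1 j.+1 || adjE7 j.+1 i.+1 then -1 else 0.

Definition formE7 (u v : Lambda) : int :=
  \sum_(i < 7) \sum_(j < 7) u i * v j * cartanE7 i j.

(* roots of the (simply laced, finite type) E7 root system: the lattice
   vectors of squared length 2; positive roots: nonnegative coefficients *)
Definition is_root (v : Lambda) : Prop := formE7 v v = 2.
Definition is_pos_root (v : Lambda) : Prop :=
  is_root v /\ forall i, 0 <= v i.

Definition f_simple (i : 'I_7) : V :=
  match val i with
  | 0 => mkV F1 F0 F0
  | 1 => mkV F0 F3 F0
  | 2 => mkV F3 F0 F0
  | 3 => mkV F1 F1 F1
  | 4 => mkV F0 F0 F3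
  | 5 => mkV F0 F0 F1
  | _ => mkV F0 F3 F3
  end.

(* V has exponent 2, so f(sum c_i alpha_i) = (+)_{i : c_i odd} f(alpha_i) *)
Definition fmap (v : Lambda) : V :=
  foldr Vadd V0 [seq (if odd `|v i|%N then f_simple i else V0) | i <- enum 'I_7].

Definition idx7 : 'I_7 := @Ordinal 7 6 isT.

Definition Gamma7 (x : V) : Prop :=
  exists v : Lambda, is_pos_root v /\ v idx7 != 0 /\ fmap v = x.

From mathcomp Require Import all_boot all_order all_algebra.
From mathcomp Require Import zify ring.
Set Implicit Arguments.
Unset Strict Implicit.
Unset Printing Implicit Defensive.
Import GRing.Theory Num.Theory.
Local Open Scope ring_scope.

(* Gamma_7^+ is determined explicitly. A root a of E7 has (a|a) = 2, and its k-th
   coefficient is (a|w_k) for the fundamental weight w_k, so Cauchy-Schwarz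
   gives a_k^2 <= 2 (w_k|w_k); this bounds the coefficients of a by those of
   the highest root, and enumerating the resulting box shows that Gamma_7^+
   consists of the 27 vectors of V with exactly one zero coordinate. Since the
   form on V is bilinear and alternating, x1 (+) x2 is orthogonal to x1 and x2
   whenever x1 is orthogonal to x2; closure under such sums, uniqueness of the
   third point and the converse are finite checks on these 27 vectors. *)

Section CauchySchwarz.

Variables (R : numDomainType) (I : Type) (B : (I -> R) -> (I -> R) -> R).
Hypothesis BC : forall u v, B u v = B v u.
Hypothesis B_linear : forall a b u w v,
  B (fun i => a * u i + b * w i) v = a * B u v + b * B w v.
Hypothesis B_ge0 : forall v, 0 <= B v v.

Lemma cauchy_schwarz u w : 0 < B w w -> B u w ^+ 2 <= B u u * B w w.
Proof.
move=> w_gt0; pose x i := B w w * u i + - B u w * w i.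
have Bx v : B x v = B w w * B u v - B u w * B w v by rewrite B_linear mulNr.
have Bxx : B x x = B w w * (B u u * B w w - B u w ^+ 2).
  by rewrite Bx (BC u) (BC w) !Bx (BC w u); ring.
by rewrite -subr_ge0 -(pmulr_rge0 _ w_gt0) -Bxx.
Qed.

End CauchySchwarz.

Lemma cartanE7C i j : cartanE7 i j = cartanE7 j i.
Proof. by rewrite /cartanE7 eq_sym orbC. Qed.

Lemma formE7C u v : formE7 u v = formE7 v u.
Proof.
rewrite /formE7 exchange_big; apply: eq_bigr => i _; apply: eq_bigr => j _.
by rewrite cartanE7C [u j * _]mulrC.
Qed.

Lemma formE7_linear a b u w v :
  formE7 (fun i => a * u i + b * w i) v = a * formE7 u v + b * formE7 w v.
Proof.
rewrite /formE7 !mulr_sumr -big_split; apply: eq_bigr => i _.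
rewrite !mulr_sumr -big_split; apply: eq_bigr => j _ /=; ring.
Qed.

Lemma eq_formE7 u u' v v' : u =1 u' -> v =1 v' -> formE7 u v = formE7 u' v'.
Proof.
move=> eq_u eq_v; apply: eq_bigr => i _; apply: eq_bigr => j _.
by rewrite eq_u eq_v.
Qed.

Definition coord (v : Lambda) (k : nat) : int := v (inord k).

(* Completing the squares along the Dynkin diagram 1-3-4-5-6-7 (an LDL^T
   decomposition of the Cartan matrix), with denominators cleared. *)
Lemma formE7_sos v : 60 * formE7 v v =
  30 * (2 * coord v 0 - coord v 2) ^+ 2 + 30 * (2 * coord v 1 - coord v 3) ^+ 2
  + 10 * (3 * coord v 2 - 2 * coord v 3) ^+ 2 + 2 * (5 * coord v 3 - 6 * coord v 4) ^+ 2
  + 3 * (4 * coord v 4 - 5 * coord v 5) ^+ 2 + 5 * (3 * coord v 5 - 4 * coord v 6) ^+ 2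
  + 40 * coord v 6 ^+ 2.
Proof.
have vE i : v i = coord v i by rewrite /coord inord_val.
rewrite /formE7 !big_ord_recl !big_ord0 !vE /cartanE7 /= /bump /=; ring.
Qed.

Lemma formE7_ge0 v : 0 <= formE7 v v.
Proof.
by rewrite -(@pmulr_rge0 _ 60) // formE7_sos !addr_ge0 // mulr_ge0 // sqr_ge0.
Qed.

(* A closed enumeration of ['I_7] on which [vm_compute] can run: [enum 'I_7]
   itself is blocked by the opaque reflection proofs used in [insub]. *)
Definition ord7_enum : seq 'I_7 :=
  [:: @Ordinal 7 0 isT; @Ordinal 7 1 isT; @Ordinal 7 2 isT; @Ordinal 7 3 isT;
      @Ordinal 7 4 isT; @Ordinal 7 5 isT; @Ordinal 7 6 isT].

Lemma enum_ord7 : enum 'I_7 = ord7_enum.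
Proof. by apply: (inj_map val_inj); rewrite val_enum_ord. Qed.

Lemma index_enum_ord7 : index_enum 'I_7 = ord7_enum.
Proof. by rewrite [index_enum _]unlock -enumT enum_ord7. Qed.

Lemma mem_ord7_enum (i : 'I_7) : i \in ord7_enum.
Proof. by rewrite -enum_ord7 mem_enum. Qed.

(* Twice the fundamental weights, in the basis of simple roots: the rows of
   twice the inverse Cartan matrix. *)
Definition fund_weight2 (k : 'I_7) : Lambda := fun j =>
  nth 0 (nth [::] [:: [:: 4; 4; 6; 8; 6; 4; 2]; [:: 4; 7; 8; 12; 9; 6; 3];
                      [:: 6; 8; 12; 16; 12; 8; 4]; [:: 8; 12; 16; 24; 18; 12; 6];
                      [:: 6; 9; 12; 18; 15; 10; 5]; [:: 4; 6; 8; 12; 10; 8; 4];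
                      [:: 2; 3; 4; 6; 5; 4; 3]] k) j.

Lemma cartan_fund_weight2 i k :
  \sum_j cartanE7 i j * fund_weight2 k j = 2 * (i == k)%:R.
Proof.
have /allP/(_ i (mem_ord7_enum i))/allP/(_ k (mem_ord7_enum k))/eqP // :
  all (fun i => all (fun k =>
    \sum_j cartanE7 i j * fund_weight2 k j == 2 * (i == k)%:R) ord7_enum) ord7_enum.
by rewrite unlock index_enum_ord7; vm_compute.
Qed.

Lemma formE7_fund_weight2 v k : formE7 v (fund_weight2 k) = 2 * v k.
Proof.
have -> : formE7 v (fund_weight2 k) = \sum_i v i * (2 * (i == k)%:R).
  rewrite /formE7; apply: eq_bigr => i _.
  by rewrite -cartan_fund_weight2 mulr_sumr; apply: eq_bigr => j _; ring.
rewrite (bigD1 k) //= big1 => [|i /negbTE ->]; last by rewrite mulr0.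
by rewrite eqxx mulr1 addr0 mulrC.
Qed.

Lemma fund_weight2_diag_gt0 k : 0 < fund_weight2 k k.
Proof. by case: k => [[|[|[|[|[|[|[|//]]]]]]] ?]. Qed.

Lemma root_coef_sqr_le v k : is_root v -> v k ^+ 2 <= fund_weight2 k k.
Proof.
move=> root_v.
have w_gt0 : 0 < formE7 (fund_weight2 k) (fund_weight2 k).
  by rewrite formE7_fund_weight2 mulr_gt0 ?fund_weight2_diag_gt0.
have := cauchy_schwarz formE7C formE7_linear formE7_ge0 v w_gt0.
rewrite !formE7_fund_weight2 root_v; nia.
Qed.

(* The coefficients of the highest root of E7; here they arise as the integer
   square roots of the [fund_weight2 k k]. *)
Definition root_bound (k : 'I_7) : nat := nth 0%N [:: 2; 2; 3; 4; 3; 2; 1]%N k.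

Lemma root_coef_bound v k : is_root v -> `|v k| <= (root_bound k)%:Z.
Proof.
move=> /(root_coef_sqr_le k).
have : fund_weight2 k k < (root_bound k).+1%:Z ^+ 2.
  by case: k => [[|[|[|[|[|[|[|//]]]]]]] ?].
nia.
Qed.

Fixpoint box (bs : seq nat) : seq (seq nat) :=
  if bs is b :: bs' then [seq n :: s | n <- iota 0 b.+1, s <- box bs'] else [:: [::]].

Lemma mem_box bs s : (s \in box bs) = all2 leq s bs.
Proof.
elim: bs s => [|b bs IHbs] [|n s] //.
  by apply/negbTE/allpairsPdep => -[m [t [_ _]]].
apply/allpairsPdep/andP => [[m [t []]]|[le_nb all_sbs]].
- by rewrite mem_iota ltnS IHbs => le_mb all_tbs [-> ->].
- by exists n, s; rewrite mem_iota ltnS IHbs.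
Qed.

Definition lambda_of_seq (s : seq nat) : Lambda := fun i => (nth 0%N s i)%:Z.

Definition Delta7_coefs : seq (seq nat) :=
  [seq s <- box [seq root_bound i | i <- enum 'I_7]
     | (formE7 (lambda_of_seq s) (lambda_of_seq s) == 2) && (0 < nth 0 s 6)%N].

Lemma eq_fmap u v : u =1 v -> fmap u = fmap v.
Proof. by move=> eq_uv; rewrite /fmap; under eq_map do rewrite eq_uv. Qed.

Lemma Gamma7_Delta7_coefs x :
  Gamma7 x <-> x \in [seq fmap (lambda_of_seq s) | s <- Delta7_coefs].
Proof.
split=> [[v [[root_v v_ge0] [v7 <-]]]|/mapP[s]].
  pose s := [seq `|v i|%N | i <- enum 'I_7].
  have sv : lambda_of_seq s =1 v.
    move=> i; rewrite /lambda_of_seq (nth_map i) ?size_enum_ord //.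
    by rewrite nth_ord_enum abszE ger0_norm.
  apply/mapP; exists s; last exact: eq_fmap.
  rewrite mem_filter mem_box (eq_formE7 sv sv) root_v eqxx /=.
  apply/andP; split.
    have s7 : (nth 0 s 6)%:Z = v idx7 by exact: sv idx7.
    by rewrite lt0n -eqz_nat s7.
  rewrite /s; elim: (enum 'I_7) => //= i e ->; rewrite andbT -lez_nat abszE.
  exact: root_coef_bound.
rewrite mem_filter => /andP[/andP[/eqP root_s s7] _] ->.
exists (lambda_of_seq s); split; first by split.
by split; rewrite // /lambda_of_seq eqz_nat -lt0n.
Qed.

Definition nonzeroF : seq F := [:: F1; F2; F3].

Definition Gamma7_list : seq V :=
  [seq mkV F0 b c | b <- nonzeroF, c <- nonzeroF]
  ++ [seq mkV a F0 c | a <- nonzeroF, c <- nonzeroF]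
  ++ [seq mkV a b F0 | a <- nonzeroF, b <- nonzeroF].

Lemma Gamma7P x : Gamma7 x <-> x \in Gamma7_list.
Proof.
rewrite Gamma7_Delta7_coefs.
suff /perm_mem -> :
  perm_eq [seq fmap (lambda_of_seq s) | s <- Delta7_coefs] Gamma7_list by [].
by rewrite /Delta7_coefs /fmap /formE7 enum_ord7 unlock index_enum_ord7; vm_compute.
Qed.

Lemma FformC a b : Fform a b = Fform b a.
Proof. by case: a b => [[] []] [[] []]. Qed.

Lemma Fformxx a : Fform a a = false.
Proof. by case: a => [[] []]. Qed.

Lemma Fform_addr a b c : Fform a (Fadd b c) = Fform a b (+) Fform a c.
Proof. by case: a b c => [[] []] [[] []] [[] []]. Qed.

Lemma VformC x y : Vform x y = Vform y x.
Proof. by rewrite /Vform !(FformC x.1.1) !(FformC x.1.2) (FformC x.2). Qed.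

Lemma Vformxx x : Vform x x = false.
Proof. by rewrite /Vform !Fformxx. Qed.

Lemma Vform_addr x y z : Vform x (Vadd y z) = Vform x y (+) Vform x z.
Proof.
rewrite /Vform /Vadd /= !Fform_addr.
by do 6!case: (Fform _ _).
Qed.

Lemma FaddKl a b : Fadd a (Fadd a b) = b.
Proof. by rewrite /Fadd /= !addKb; case: b. Qed.

Lemma FaddKr a b : Fadd (Fadd a b) b = a.
Proof. by rewrite /Fadd /= !addbK; case: a. Qed.

Lemma Faddxx a : Fadd a a = F0.
Proof. by rewrite /Fadd !addbb. Qed.

Lemma VaddKl x y : Vadd x (Vadd x y) = y.
Proof. by rewrite /Vadd /= !FaddKl; case: y => [[]]. Qed.

Lemma VaddKr x y : Vadd (Vadd x y) y = x.
Proof. by rewrite /Vadd /= !FaddKr; case: x => [[]]. Qed.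

Lemma Vaddxx x : Vadd x x = V0.
Proof. by rewrite /Vadd !Faddxx. Qed.

Lemma Vadd_eq_l x y : Vadd x y = x -> y = V0.
Proof. by move/(congr1 (Vadd x)); rewrite VaddKl Vaddxx. Qed.

Lemma Vadd_eq_r x y : Vadd x y = y -> x = V0.
Proof. by move/(congr1 (Vadd^~ y)); rewrite VaddKr Vaddxx. Qed.

Lemma V0_notin_Gamma7 : ~ Gamma7 V0.
Proof. by move/Gamma7P. Qed.

Lemma Gamma7_add x y :
  Gamma7 x -> Gamma7 y -> x <> y -> Vform x y = false -> Gamma7 (Vadd x y).
Proof.
have /allrelP ok : allrel (fun x y =>
    (x != y) && ~~ Vform x y ==> (Vadd x y \in Gamma7_list)) Gamma7_list Gamma7_list.
  by vm_compute.
move=> /Gamma7P xG /Gamma7P yG /eqP xy xy_perp.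
by apply/Gamma7P/(implyP (ok x y xG yG)); rewrite xy xy_perp.
Qed.

Lemma Gamma7_perp_of_add x y :
  Gamma7 x -> Gamma7 y -> Gamma7 (Vadd x y) -> Vform x y = false.
Proof.
have /allrelP ok : allrel (fun x y =>
    (Vadd x y \in Gamma7_list) ==> ~~ Vform x y) Gamma7_list Gamma7_list.
  by vm_compute.
by move=> /Gamma7P xG /Gamma7P yG /Gamma7P /(implyP (ok x y xG yG)) /negbTE.
Qed.

Lemma Gamma7_perp_unique x y z :
  Gamma7 x -> Gamma7 y -> Gamma7 z -> x <> y -> Vform x y = false ->
  z <> x -> z <> y -> Vform x z = false -> Vform y z = false -> z = Vadd x y.
Proof.
have ok : all (fun z => allrel (fun x y =>
    [&& x != y, ~~ Vform x y, z != x, z != y & ~~ Vform x z && ~~ Vform y z]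
    ==> (z == Vadd x y)) Gamma7_list Gamma7_list) Gamma7_list.
  by vm_compute.
move=> /Gamma7P xG /Gamma7P yG /Gamma7P zG /eqP xy xy_perp /eqP zx /eqP zy.
move=> xz_perp yz_perp.
apply/eqP/(implyP (allrelP (allP ok z zG) x y xG yG)).
by rewrite xy xy_perp zx zy xz_perp yz_perp.
Qed.

Theorem mainTheorem9 :
  forall x1 x2 : V, Gamma7 x1 -> Gamma7 x2 -> x1 <> x2 ->
    (Vform x1 x2 = false ->
       (exists! x3 : V, [/\ Gamma7 x3, x3 <> x1, x3 <> x2,
                           Vform x1 x3 = false & Vform x2 x3 = false]) /\
       (forall x3 : V, Gamma7 x3 -> x3 <> x1 -> x3 <> x2 ->
          Vform x1 x3 = false -> Vform x2 x3 = false ->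
          Vadd (Vadd x1 x2) x3 = V0))
    /\ (Gamma7 (Vadd x1 x2) -> Vform x1 x2 = false).
Proof.
move=> x1 x2 G1 G2 x12; split; last exact: Gamma7_perp_of_add.
move=> perp12.
have third x3 : [/\ Gamma7 x3, x3 <> x1, x3 <> x2,
                    Vform x1 x3 = false & Vform x2 x3 = false] -> x3 = Vadd x1 x2.
  by case=> G3 x31 x32 perp13 perp23; apply: Gamma7_perp_unique.
split=> [|x3 G3 x31 x32 perp13 perp23]; last first.
  by rewrite (third x3) ?Vaddxx.
exists (Vadd x1 x2); split=> [|x3 /third -> //]; split.
- exact: Gamma7_add.
- by move/Vadd_eq_l=> x2_0; apply: V0_notin_Gamma7; rewrite -x2_0.
- by move/Vadd_eq_r=> x1_0; apply: V0_notin_Gamma7; rewrite -x1_0.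
- by rewrite Vform_addr Vformxx perp12.
- by rewrite Vform_addr Vformxx VformC perp12.
Qed.
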